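(* For every $k\in\mathbb{N}$ and every $\epsilon\ge 0$, $$\Pr\{\chi^2_k\ge k(1+\epsilon)\}\ \ge\ \frac{1}{3\sqrt{k}\,\epsilon+6}\exp\left(-\frac{k\epsilon}{2}\right),$$ where $\chi^2_k$ denotes a chi-square random variable with $k$ degrees of freedom. *)

From Stdlib Require Import Reals Lra ClassicalEpsilon.
Open Scope R_scope.

(* This handles both an integrable singularity at a
   (needed for the Gamma function / chi-square density with k = 1) and an
   ordinary left endpoint (where the limit u -> a+ is just int_a^v). *)
Definition improper_integral (f : R -> R) (a l : R) : Prop :=
  (forall u v, a < u -> u <= v -> inhabited (Riemann_integrable f u v)) /\
  (forall eps, 0 < eps ->
     exists delta, 0 < delta /\ exists M,
       forall u v (pr : Riemann_integrable f u v),
         a < u -> u < a + delta -> M < v ->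
         Rabs (RiemannInt pr - l) < eps).

Definition Iint (f : R -> R) (a : R) : R :=
  epsilon (inhabits 0) (fun l => improper_integral f a l).

Definition Gamma (s : R) : R :=
  Iint (fun t => Rpower t (s - 1) * exp (- t)) 0.

Definition chisq_density (k : nat) (x : R) : R :=
  Rpower x (INR k / 2 - 1) * exp (- x / 2)
  / (Rpower 2 (INR k / 2) * Gamma (INR k / 2)).

Definition chisq_tail (k : nat) (c : R) : R :=
  Iint (chisq_density k) c.

(* The tail is at least the integral of the density over [c, c + L], c = k (1 + eps), on which
   the density dominates its value at c times e^(-r (x - c)) for an explicit rate r; integrating
   gives density(c) (1 - e^(-r L)) / r.  The normalising constant is controlled by a
   Stirling-type bound Gamma s <= (17/5) s^(s - 1/2) e^(-s) at half-integers, which follows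
   from Gamma(1/2), Gamma(1) and Gamma(s + 1) = s Gamma s.  What remains is elementary: for
   k >= 2 the choice L = sqrt (2 k) even yields the bound e^(-k eps / 2) / 6, and for k = 1
   the choice L = 4 yields the claim. *)

From Stdlib Require Import Reals Lra Lia Factorial Classical ClassicalEpsilon.
From Coquelicot Require Import Coquelicot.
Open Scope R_scope.

Lemma improper_integral_unique f a l1 l2 :
  improper_integral f a l1 -> improper_integral f a l2 -> l1 = l2.
Proof.
  intros [Hint H1] [_ H2].
  assert (Hclose : forall e, 0 < e -> Rabs (l1 - l2) < e).
  { intros e He.
    destruct (H1 (e / 2)) as (d1 & Hd1 & M1 & HM1); [lra|].
    destruct (H2 (e / 2)) as (d2 & Hd2 & M2 & HM2); [lra|].
    set (u := a + Rmin d1 d2 / 2).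
    set (v := Rmax (Rmax M1 M2) u + 1).
    assert (0 < Rmin d1 d2) by (apply Rmin_glb_lt; lra).
    pose proof (Rmin_l d1 d2); pose proof (Rmin_r d1 d2).
    pose proof (Rmax_l (Rmax M1 M2) u); pose proof (Rmax_r (Rmax M1 M2) u).
    pose proof (Rmax_l M1 M2); pose proof (Rmax_r M1 M2).
    destruct (Hint u v) as [pr]; [unfold u; lra|unfold v, u in *; lra|].
    unfold v, u in *.
    specialize (HM1 _ _ pr); specialize (HM2 _ _ pr).
    apply Rabs_def2 in HM1; [|lra..]. apply Rabs_def2 in HM2; [|lra..].
    apply Rabs_def1; lra. }
  destruct (Req_dec l1 l2) as [|Hne]; [assumption|].
  specialize (Hclose _ (Rabs_pos_lt _ (Rminus_eq_contra _ _ Hne))). lra.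
Qed.

Lemma Iint_eq f a l : improper_integral f a l -> Iint f a = l.
Proof.
  intros H. apply (improper_integral_unique f a); [|exact H].
  unfold Iint. apply epsilon_spec. now exists l.
Qed.

Definition partial_integrals_le (f : R -> R) (a B : R) : Prop :=
  forall u v, a < u -> u <= v -> RInt f u v <= B.

Lemma RInt_of_derive (F f : R -> R) u v : u <= v ->
  (forall x, u <= x <= v -> is_derive F x (f x)) ->
  (forall x, u <= x <= v -> continuous f x) -> @eq R (RInt f u v) (F v - F u).
Proof.
  intros Huv Hd Hc.
  apply (@is_RInt_unique R_CompleteNormedModule), (@is_RInt_derive R_CompleteNormedModule);
    rewrite Rmin_left, Rmax_right by lra; assumption.
Qed.

Lemma RInt_le_cont (f g : R -> R) u v : u <= v ->
  (forall x, u <= x <= v -> continuous f x) ->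
  (forall x, u <= x <= v -> continuous g x) ->
  (forall x, u < x < v -> f x <= g x) -> RInt f u v <= RInt g u v.
Proof.
  intros Huv Hf Hg H.
  apply RInt_le; auto; apply (@ex_RInt_continuous R_CompleteNormedModule);
    rewrite Rmin_left, Rmax_right by lra; assumption.
Qed.

Section NonnegativeIntegrand.

Variables (f : R -> R) (a : R).
Hypothesis f_cont : forall x, a < x -> continuous f x.
Hypothesis f_ge0 : forall x, a < x -> 0 <= f x.

Lemma ex_RInt_halfline u v : a < u -> u <= v -> ex_RInt f u v.
Proof.
  intros Hu Huv. apply (@ex_RInt_continuous R_CompleteNormedModule).
  intros z Hz. apply f_cont. rewrite Rmin_left in Hz; lra.
Qed.

Lemma RInt_halfline_ge0 u v : a < u -> u <= v -> 0 <= RInt f u v.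
Proof.
  intros Hu Huv. apply RInt_ge_0; auto using ex_RInt_halfline.
  intros x Hx. apply f_ge0. lra.
Qed.

Lemma RInt_halfline_le_wider u1 u v v1 :
  a < u1 -> u1 <= u -> u <= v -> v <= v1 -> RInt f u v <= RInt f u1 v1.
Proof.
  intros H1 H2 H3 H4.
  rewrite <- (RInt_Chasles f u1 u v1), <- (RInt_Chasles f u v v1);
    try (apply ex_RInt_halfline; lra).
  pose proof (RInt_halfline_ge0 u1 u). pose proof (RInt_halfline_ge0 v v1).
  unfold plus; simpl. lra.
Qed.

Lemma improper_integral_sup B : partial_integrals_le f a B ->
  exists l, improper_integral f a l /\ partial_integrals_le f a l /\
    forall B', partial_integrals_le f a B' -> l <= B'.
Proof.
  intros HB.
  set (E := fun y => exists u v, a < u /\ u <= v /\ y = RInt f u v).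
  assert (HbE : bound E) by (exists B; intros y (u & v & Hu & Huv & ->); auto).
  assert (HnE : exists y, E y) by (exists (RInt f (a + 1) (a + 1)), (a + 1), (a + 1); lra).
  destruct (completeness E HbE HnE) as [l [Hub Hlub]].
  exists l. split; [split|split].
  - intros u v Hu Huv. constructor. apply ex_RInt_Reals_0, ex_RInt_halfline; assumption.
  - intros e He.
    assert (Hy : exists y, E y /\ l - e < y).
    { apply NNPP; intros Hn. enough (l <= l - e) by lra. apply Hlub.
      intros y Ey. apply Rnot_lt_le. intros Hlt. apply Hn. now exists y. }
    destruct Hy as [y [(u0 & v0 & Hu0 & Huv0 & ->) Hy]].
    exists (u0 - a). split; [lra|]. exists v0.
    intros u v pr Hu Hud Hv. rewrite <- RInt_Reals.
    assert (RInt f u v <= l) by (apply Hub; exists u, v; repeat split; lra).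
    assert (RInt f u0 v0 <= RInt f u v) by (apply RInt_halfline_le_wider; lra).
    apply Rabs_def1; lra.
  - intros u v Hu Huv. apply Hub. now exists u, v.
  - intros B' HB'. apply Hlub. intros y (u & v & Hu & Huv & ->). auto.
Qed.

Lemma Iint_partial_le B : partial_integrals_le f a B ->
  partial_integrals_le f a (Iint f a) /\
  forall B', partial_integrals_le f a B' -> Iint f a <= B'.
Proof.
  intros HB. destruct (improper_integral_sup B HB) as (l & Hl & Hle & Hleast).
  now rewrite (Iint_eq f a l Hl).
Qed.

End NonnegativeIntegrand.

Lemma exp_le_exp x y : x <= y -> exp x <= exp y.
Proof. intros [Hlt|Heq]; [now apply Rlt_le, exp_increasing | now rewrite Heq]. Qed.

Lemma exp_le_1 x : x <= 0 -> exp x <= 1.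
Proof. intros Hx. rewrite <- exp_0. now apply exp_le_exp. Qed.

Lemma ln_le_sub1 y : 0 < y -> ln y <= y - 1.
Proof. intros Hy. pose proof (exp_ineq1_le (ln y)) as Hexp. rewrite exp_ln in Hexp; lra. Qed.

Lemma one_sub_inv_le_ln y : 0 < y -> 1 - / y <= ln y.
Proof.
  intros Hy. pose proof (exp_ineq1_le (- ln y)) as Hexp.
  rewrite exp_Ropp, exp_ln in Hexp; lra.
Qed.

Lemma exp_neg_le_1_sub_half t : 0 <= t <= 1 -> exp (- t) <= 1 - t / 2.
Proof.
  intros Ht. pose proof (exp_ineq1_le t). pose proof (exp_pos (- t)).
  assert (exp (- t) * exp t = 1) by (rewrite <- exp_plus, Rplus_opp_l; apply exp_0).
  nra.
Qed.

(* Partial sums of the alternating series for e^(-1) up to 1/6! and 1/7! bracket it. *)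
Lemma exp_neg1_bounds : 0.3678 <= exp (-1) <= 0.3681.
Proof.
  unfold exp; case (exist_exp (-1)) as (x, e); simpl; unfold exp_in in e.
  assert (H := alternated_series_ineq (fun i : nat => / INR (fact i)) x 3).
  cut (sum_f_R0 (tg_alt (fun i : nat => / INR (fact i))) (S (2 * 3)) <= x <=
       sum_f_R0 (tg_alt (fun i : nat => / INR (fact i))) (2 * 3)).
  { intros [H1 H2]. simpl in H1, H2; unfold tg_alt in H1, H2; simpl in H1, H2. lra. }
  apply H.
  - intros n. apply Rinv_le_contravar; [apply INR_fact_lt_0|].
    apply le_INR, fact_le, Nat.le_succ_diag_r.
  - intros eps Heps. destruct (cv_speed_pow_fact 1 eps Heps) as [N HN].
    exists N. intros n Hn. specialize (HN n Hn).
    rewrite pow1 in HN. unfold Rdiv in HN. now rewrite Rmult_1_l in HN.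
  - intros eps Heps. destruct (e eps Heps) as [N HN]. exists N. intros n Hn.
    unfold tg_alt. rewrite (sum_eq _ (fun i => / INR (fact i) * (-1) ^ i)); auto.
    intros i _. apply Rmult_comm.
Qed.

Lemma continuous_of_ex_derive (f : R -> R) x : ex_derive f x -> continuous f x.
Proof. exact (@ex_derive_continuous R_AbsRing R_NormedModule f x). Qed.

Lemma RInt_exp_neg u v : u <= v -> RInt (fun t => exp (- t)) u v = exp (- u) - exp (- v).
Proof.
  intros Huv. rewrite (RInt_of_derive (fun t => - exp (- t))); [lra|assumption| |].
  - intros x _. auto_derive; [auto|ring].
  - intros x _. apply continuous_of_ex_derive. auto_derive. auto.
Qed.

(* Compare the derivatives 4 / (2 + t)^2 <= 1 / (1 + t). *)
Lemma ln_1p_ge x : 0 <= x -> 2 * x / (2 + x) <= ln (1 + x).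
Proof.
  intros Hx.
  assert (Hln : RInt (fun t => / (1 + t)) 0 x = ln (1 + x) - ln (1 + 0)).
  { apply (RInt_of_derive (fun t => ln (1 + t))); [assumption| |].
    - intros y Hy. auto_derive; [lra|]. field. lra.
    - intros y Hy. apply continuous_of_ex_derive. auto_derive. lra. }
  assert (Hrat : RInt (fun t => 4 / (2 + t) ^ 2) 0 x = - 4 / (2 + x) - - 4 / (2 + 0)).
  { apply (RInt_of_derive (fun t => - 4 / (2 + t))); [assumption| |].
    - intros y Hy. auto_derive; [lra|]. field. lra.
    - intros y Hy. apply continuous_of_ex_derive. auto_derive. nra. }
  assert (Hle : RInt (fun t => 4 / (2 + t) ^ 2) 0 x <= RInt (fun t => / (1 + t)) 0 x).
  { apply RInt_le_cont; [assumption| | |].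
    - intros y Hy. apply continuous_of_ex_derive. auto_derive. nra.
    - intros y Hy. apply continuous_of_ex_derive. auto_derive. lra.
    - intros y Hy.
      assert (0 <= y ^ 2 / ((1 + y) * (2 + y) ^ 2)).
      { apply Rdiv_le_0_compat; [nra|]. apply Rmult_lt_0_compat; [lra|]. apply pow_lt; lra. }
      assert (/ (1 + y) - 4 / (2 + y) ^ 2 = y ^ 2 / ((1 + y) * (2 + y) ^ 2)) by (field; lra).
      lra. }
  rewrite Rplus_0_r, ln_1 in Hln.
  replace (2 * x / (2 + x)) with (- 4 / (2 + x) - - 4 / (2 + 0)) by (field; lra).
  lra.
Qed.

Definition gamma_kernel (s t : R) : R := Rpower t (s - 1) * exp (- t).

(* C = 17/5 lies between what the crude base case Gamma(1/2) <= 5/3 + 1/e needs (about 3.35)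
   and what the final estimate for k = 1 tolerates (about 3.67). *)
Definition stirling_bound (s : R) : R := 17 / 5 * exp ((s - 1 / 2) * ln s - s).

Lemma gamma_kernel_cont s x : 0 < x -> continuous (gamma_kernel s) x.
Proof. intros Hx. apply continuous_of_ex_derive. unfold gamma_kernel, Rpower. auto_derive. lra. Qed.

Lemma gamma_kernel_pos s x : 0 < x -> 0 < gamma_kernel s x.
Proof. intros. unfold gamma_kernel, Rpower. apply Rmult_lt_0_compat; apply exp_pos. Qed.

Lemma gamma_kernel_ge0 s x : 0 < x -> 0 <= gamma_kernel s x.
Proof. intros. now apply Rlt_le, gamma_kernel_pos. Qed.

Lemma Gamma_bounds s B : partial_integrals_le (gamma_kernel s) 0 B -> 0 < Gamma s <= B.
Proof.
  intros HB.
  destruct (Iint_partial_le _ 0 (gamma_kernel_cont s) (gamma_kernel_ge0 s) B HB)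
    as [Hub Hleast].
  split; [|exact (Hleast B HB)].
  apply Rlt_le_trans with (RInt (gamma_kernel s) 1 2); [|apply Hub; lra].
  apply RInt_gt_0; [lra| |]; intros x Hx.
  - apply gamma_kernel_pos; lra.
  - apply gamma_kernel_cont; lra.
Qed.

Lemma RInt_gamma_kernel_succ s u v : 0 < u -> u <= v ->
  RInt (gamma_kernel (s + 1)) u v =
  s * RInt (gamma_kernel s) u v + Rpower u s * exp (- u) - Rpower v s * exp (- v).
Proof.
  intros Hu Huv.
  assert (Hint : ex_RInt (gamma_kernel s) u v).
  { apply (ex_RInt_halfline _ 0); auto using gamma_kernel_cont. }
  assert (Hparts : RInt (fun t => gamma_kernel (s + 1) t - s * gamma_kernel s t) u v =
                   Rpower u s * exp (- u) - Rpower v s * exp (- v)).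
  { rewrite (RInt_of_derive (fun t => - (Rpower t s * exp (- t)))); [lra|lra| |].
    - intros x Hx. unfold gamma_kernel, Rpower. auto_derive; [lra|].
      replace (s + 1 - 1) with s by ring.
      replace ((s - 1) * ln x) with (s * ln x + - ln x) by ring.
      rewrite exp_plus, (exp_Ropp (ln x)), (exp_ln x) by lra. field. lra.
    - intros x Hx. apply continuous_of_ex_derive. unfold gamma_kernel, Rpower. auto_derive. lra. }
  rewrite (RInt_minus (V := R_CompleteNormedModule)) in Hparts.
  - rewrite (RInt_scal (V := R_CompleteNormedModule)) in Hparts by exact Hint.
    unfold minus, plus, opp, scal in Hparts; simpl in Hparts; unfold mult in Hparts; simpl in Hparts.
    lra.
  - apply (ex_RInt_halfline _ 0); auto using gamma_kernel_cont.
  - now apply (ex_RInt_scal (V := R_CompleteNormedModule)).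
Qed.

Lemma Rpower_small s eta u : 0 < s -> 0 < eta -> 0 < u ->
  exists u', 0 < u' <= u /\ Rpower u' s <= eta.
Proof.
  intros Hs He Hu.
  set (w := Rpower eta (/ s)).
  assert (Hw : 0 < w) by (unfold w, Rpower; apply exp_pos).
  exists (Rmin u w). split; [split; [apply Rmin_glb_lt; lra | apply Rmin_l]|].
  apply Rle_trans with (Rpower w s).
  - apply Rle_Rpower_l; [lra|split; [apply Rmin_glb_lt; lra| apply Rmin_r]].
  - unfold w. rewrite Rpower_mult, Rinv_l, Rpower_1 by lra. lra.
Qed.

(* The boundary term u^s e^(-u) vanishes as u -> 0+, since partial integrals grow when u decreases. *)
Lemma gamma_partial_succ s B : 0 < s ->
  partial_integrals_le (gamma_kernel s) 0 B ->
  partial_integrals_le (gamma_kernel (s + 1)) 0 (s * B).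
Proof.
  intros Hs HB u v Hu Huv.
  apply Rle_plus_epsilon. intros eta Heta.
  destruct (Rpower_small s eta u Hs Heta Hu) as (u' & [Hu' Hu'u] & Hsmall).
  apply Rle_trans with (RInt (gamma_kernel (s + 1)) u' v).
  { apply (RInt_halfline_le_wider _ 0); auto using gamma_kernel_cont, gamma_kernel_ge0; lra. }
  rewrite RInt_gamma_kernel_succ by lra.
  assert (s * RInt (gamma_kernel s) u' v <= s * B) by (apply Rmult_le_compat_l; [lra|apply HB; lra]).
  assert (Rpower u' s * exp (- u') <= Rpower u' s).
  { assert (0 < Rpower u' s) by (unfold Rpower; apply exp_pos).
    assert (exp (- u') <= 1) by (apply exp_le_1; lra).
    nra. }
  assert (0 <= Rpower v s * exp (- v)).
  { unfold Rpower. apply Rlt_le, Rmult_lt_0_compat; apply exp_pos. }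
  lra.
Qed.

Lemma stirling_bound_succ s : 0 < s -> s * stirling_bound s <= stirling_bound (s + 1).
Proof.
  intros Hs. unfold stirling_bound.
  assert (Hln : 2 / (2 * s + 1) <= ln (s + 1) - ln s).
  { rewrite <- ln_div by lra.
    replace ((s + 1) / s) with (1 + / s) by (field; lra).
    replace (2 / (2 * s + 1)) with (2 * / s / (2 + / s)) by (field; lra).
    apply ln_1p_ge. apply Rlt_le, Rinv_0_lt_compat; lra. }
  assert (1 <= (s + 1 / 2) * (ln (s + 1) - ln s)).
  { apply Rmult_le_compat_l with (r := s + 1 / 2) in Hln; [|lra].
    replace ((s + 1 / 2) * (2 / (2 * s + 1))) with 1 in Hln by (field; lra). exact Hln. }
  rewrite <- (exp_ln s) at 1 by lra.
  replace (exp (ln s) * (17 / 5 * exp ((s - 1 / 2) * ln s - s)))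
    with (17 / 5 * exp (ln s + ((s - 1 / 2) * ln s - s))) by (rewrite exp_plus; ring).
  apply Rmult_le_compat_l; [lra|]. apply exp_le_exp. nra.
Qed.

Lemma gamma_partial_one : partial_integrals_le (gamma_kernel 1) 0 (stirling_bound 1).
Proof.
  intros u v Hu Huv.
  rewrite (RInt_ext _ (fun t => exp (- t))).
  - rewrite RInt_exp_neg by lra.
    assert (exp (- u) <= 1) by (apply exp_le_1; lra).
    pose proof (exp_pos (- v)). pose proof exp_neg1_bounds.
    unfold stirling_bound. rewrite ln_1.
    replace ((1 - 1 / 2) * 0 - 1) with (-1) by ring. lra.
  - intros x Hx. rewrite Rmin_left in Hx by lra.
    unfold gamma_kernel. rewrite Rminus_diag, Rpower_O by lra. lra.
Qed.

Lemma gamma_kernel_half x : 0 < x -> gamma_kernel (1 / 2) x = / sqrt x * exp (- x).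
Proof.
  intros Hx. unfold gamma_kernel. replace (1 / 2 - 1) with (- / 2) by field.
  now rewrite Rpower_Ropp, Rpower_sqrt.
Qed.

(* Near 0 use e^(-t) <= 1 - t/2, with antiderivative 2 sqrt t - sqrt t ^ 3 / 3. *)
Lemma RInt_gamma_half_head u : 0 < u -> u <= 1 -> RInt (gamma_kernel (1 / 2)) u 1 <= 5 / 3.
Proof.
  intros Hu Hu1.
  apply Rle_trans with (RInt (fun t => / sqrt t - sqrt t / 2) u 1).
  - apply RInt_le_cont; [lra| | |].
    + intros x Hx. apply gamma_kernel_cont. lra.
    + intros x Hx. apply continuous_of_ex_derive. auto_derive.
      repeat split; try apply Rgt_not_eq, sqrt_lt_R0; lra.
    + intros x Hx. rewrite gamma_kernel_half by lra.
      assert (Hs : 0 < sqrt x) by (apply sqrt_lt_R0; lra).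
      assert (Hss : sqrt x * sqrt x = x) by (apply sqrt_sqrt; lra).
      replace (/ sqrt x - sqrt x / 2) with (/ sqrt x * (1 - x / 2))
        by (rewrite <- Hss at 2; field; lra).
      apply Rmult_le_compat_l; [apply Rlt_le, Rinv_0_lt_compat; lra|].
      apply exp_neg_le_1_sub_half. lra.
  - rewrite (RInt_of_derive (fun t => 2 * sqrt t - sqrt t ^ 3 / 3)); [|lra| |].
    + rewrite sqrt_1.
      assert (0 < sqrt u) by (apply sqrt_lt_R0; lra).
      assert (sqrt u <= 1) by (rewrite <- sqrt_1; apply sqrt_le_1_alt; lra).
      nra.
    + intros x Hx. assert (0 < sqrt x) by (apply sqrt_lt_R0; lra).
      auto_derive; [lra|]. field. lra.
    + intros x Hx. assert (0 < sqrt x) by (apply sqrt_lt_R0; lra).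
      apply continuous_of_ex_derive. auto_derive. repeat split; lra.
Qed.

Lemma RInt_gamma_half_tail v : 1 <= v -> RInt (gamma_kernel (1 / 2)) 1 v <= exp (-1).
Proof.
  intros Hv.
  apply Rle_trans with (RInt (fun t => exp (- t)) 1 v).
  - apply RInt_le_cont; [lra| | |].
    + intros x Hx. apply gamma_kernel_cont. lra.
    + intros x Hx. apply continuous_of_ex_derive. auto_derive. auto.
    + intros x Hx. rewrite gamma_kernel_half by lra.
      assert (1 <= sqrt x) by (rewrite <- sqrt_1; apply sqrt_le_1_alt; lra).
      assert (0 < / sqrt x <= 1).
      { split; [apply Rinv_0_lt_compat; lra|].
        rewrite <- Rinv_1. apply Rinv_le_contravar; lra. }
      pose proof (exp_pos (- x)). nra.
  - rewrite RInt_exp_neg by lra. replace (- (1)) with (-1) by lra.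
    pose proof (exp_pos (- v)). lra.
Qed.

Lemma gamma_partial_half : partial_integrals_le (gamma_kernel (1 / 2)) 0 (stirling_bound (1 / 2)).
Proof.
  intros u v Hu Huv.
  set (u1 := Rmin u 1). set (v1 := Rmax v 1).
  assert (0 < u1) by (apply Rmin_glb_lt; lra).
  assert (u1 <= u) by apply Rmin_l. assert (u1 <= 1) by apply Rmin_r.
  assert (v <= v1) by apply Rmax_l. assert (1 <= v1) by apply Rmax_r.
  assert (Hsplit : RInt (gamma_kernel (1 / 2)) u v <= 5 / 3 + exp (-1)).
  { apply Rle_trans with (RInt (gamma_kernel (1 / 2)) u1 v1).
    { apply (RInt_halfline_le_wider _ 0); auto using gamma_kernel_cont, gamma_kernel_ge0; lra. }
    rewrite <- (RInt_Chasles _ u1 1 v1);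
      try (apply (ex_RInt_halfline _ 0); auto using gamma_kernel_cont; lra).
    pose proof (RInt_gamma_half_head u1 ltac:(assumption) ltac:(assumption)).
    pose proof (RInt_gamma_half_tail v1 ltac:(assumption)).
    unfold plus; simpl. lra. }
  unfold stirling_bound. replace ((1 / 2 - 1 / 2) * ln (1 / 2) - 1 / 2) with (- (1 / 2)) by ring.
  assert (Hsq : exp (- (1 / 2)) * exp (- (1 / 2)) = exp (-1)).
  { rewrite <- exp_plus. f_equal. field. }
  pose proof exp_neg1_bounds. pose proof (exp_pos (- (1 / 2))).
  assert (0.6 <= exp (- (1 / 2))) by nra.
  lra.
Qed.

Lemma gamma_partial_half_integer n : (1 <= n)%nat ->
  partial_integrals_le (gamma_kernel (INR n / 2)) 0 (stirling_bound (INR n / 2)).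
Proof.
  assert (Hpair : forall m, partial_integrals_le (gamma_kernel (INR (S m) / 2)) 0
                                                 (stirling_bound (INR (S m) / 2)) /\
                            partial_integrals_le (gamma_kernel (INR (S (S m)) / 2)) 0
                                                 (stirling_bound (INR (S (S m)) / 2))).
  { induction m as [|m [IH1 IH2]].
    - replace (INR 1 / 2) with (1 / 2) by (simpl; lra).
      replace (INR 2 / 2) with 1 by (simpl; lra).
      split; [apply gamma_partial_half | apply gamma_partial_one].
    - split; [exact IH2|].
      set (s := INR (S m) / 2) in IH1.
      assert (Hs : 0 < s) by (unfold s; rewrite S_INR; pose proof (pos_INR m); lra).
      replace (INR (S (S (S m))) / 2) with (s + 1) by (unfold s; rewrite !S_INR; lra).
      intros u v Hu Huv.
      apply Rle_trans with (s * stirling_bound s).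
      + now apply gamma_partial_succ.
      + now apply stirling_bound_succ. }
  intros Hn. destruct n as [|m]; [lia|]. exact (proj1 (Hpair m)).
Qed.

Lemma Gamma_half_integer_bounds n : (1 <= n)%nat ->
  0 < Gamma (INR n / 2) <= stirling_bound (INR n / 2).
Proof. intros Hn. apply Gamma_bounds, gamma_partial_half_integer, Hn. Qed.

Definition chi_kernel (s x : R) : R := Rpower x (s - 1) * exp (- x / 2).

Lemma RInt_exp_decay A r c u v : 0 < r -> u <= v ->
  RInt (fun x => A * exp (- r * (x - c))) u v =
  A / r * (exp (- r * (u - c)) - exp (- r * (v - c))) :> R.
Proof.
  intros Hr Huv.
  rewrite (RInt_of_derive (fun x => - A / r * exp (- r * (x - c)))); [field; lra|lra| |].
  - intros x _. auto_derive; [auto|]. unfold Rminus. field. lra.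
  - intros x _. apply continuous_of_ex_derive. auto_derive. auto.
Qed.

(* Integrating the minorant over [u, c + L] loses at most A (u - c), and u -> c+. *)
Lemma exp_minorant_le_partial_bound (f : R -> R) c L A r l : 0 < r -> 0 < L -> 0 < A ->
  partial_integrals_le f c l ->
  (forall x, c <= x <= c + L -> A * exp (- r * (x - c)) <= f x) ->
  (forall x, c <= x <= c + L -> continuous f x) ->
  A / r * (1 - exp (- r * L)) <= l.
Proof.
  intros Hr HL HA Hl Hmin Hc.
  apply Rle_plus_epsilon. intros eta Heta.
  set (d := Rmin L (eta / A)).
  assert (0 < d) by (apply Rmin_glb_lt; [lra|apply Rdiv_lt_0_compat; lra]).
  assert (d <= L) by apply Rmin_l.
  assert (A * d <= eta).
  { apply Rle_trans with (A * (eta / A)); [apply Rmult_le_compat_l, Rmin_r; lra|].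
    right. field. lra. }
  assert (Hf : RInt (fun x => A * exp (- r * (x - c))) (c + d) (c + L) <= RInt f (c + d) (c + L)).
  { apply RInt_le_cont; [lra| | |].
    - intros x _. apply continuous_of_ex_derive. auto_derive. auto.
    - intros x Hx. apply Hc. lra.
    - intros x Hx. apply Hmin. lra. }
  rewrite RInt_exp_decay in Hf by lra.
  replace (c + L - c) with L in Hf by ring. replace (c + d - c) with d in Hf by ring.
  assert (A / r * (1 - r * d - exp (- r * L)) <= A / r * (exp (- r * d) - exp (- r * L))).
  { apply Rmult_le_compat_l; [apply Rlt_le, Rdiv_lt_0_compat; lra|].
    pose proof (exp_ineq1_le (- r * d)). lra. }
  assert (A / r * (1 - r * d - exp (- r * L)) = A / r * (1 - exp (- r * L)) - A * d)
    by (field; lra).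
  pose proof (Hl (c + d) (c + L) ltac:(lra) ltac:(lra)).
  lra.
Qed.

(* For s >= 1, x^(s-1) grows at rate at least (s - 1) / x >= (s - 1) / (c + L) in logarithmic scale. *)
Lemma chi_kernel_decay_ge1 s c L x : 1 <= s -> 0 < c -> 0 < L -> c <= x <= c + L ->
  chi_kernel s c * exp (- (1 / 2 - (s - 1) / (c + L)) * (x - c)) <= chi_kernel s x.
Proof.
  intros Hs Hc HL Hx. unfold chi_kernel, Rpower. rewrite <- !exp_plus. apply exp_le_exp.
  assert (Hln : (x - c) / x <= ln x - ln c).
  { rewrite <- ln_div by lra.
    replace ((x - c) / x) with (1 - / (x / c)) by (field; lra).
    apply one_sub_inv_le_ln, Rdiv_lt_0_compat; lra. }
  assert ((x - c) / (c + L) <= (x - c) / x).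
  { apply Rmult_le_compat_l; [lra|]. apply Rinv_le_contravar; lra. }
  assert ((s - 1) * ((x - c) / (c + L)) <= (s - 1) * (ln x - ln c))
    by (apply Rmult_le_compat_l; lra).
  replace ((s - 1) * ((x - c) / (c + L))) with ((s - 1) / (c + L) * (x - c))
    in * by (field; lra).
  lra.
Qed.

(* For s <= 1, x^(s-1) decays at rate at most (1 - s) / c in logarithmic scale. *)
Lemma chi_kernel_decay_le1 s c x : s <= 1 -> 0 < c -> c <= x ->
  chi_kernel s c * exp (- (1 / 2 + (1 - s) / c) * (x - c)) <= chi_kernel s x.
Proof.
  intros Hs Hc Hx. unfold chi_kernel, Rpower. rewrite <- !exp_plus. apply exp_le_exp.
  assert (Hln : ln x - ln c <= x / c - 1).
  { rewrite <- ln_div by lra. apply ln_le_sub1, Rdiv_lt_0_compat; lra. }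
  assert ((1 - s) * (ln x - ln c) <= (1 - s) * (x / c - 1)) by (apply Rmult_le_compat_l; lra).
  replace ((1 - s) * (x / c - 1)) with ((1 - s) / c * (x - c)) in * by (field; lra).
  lra.
Qed.

Lemma chi_kernel_ratio s e : 0 < s -> 0 < 1 + e ->
  chi_kernel s (2 * s * (1 + e)) / (Rpower 2 s * stirling_bound s) =
  Rpower (1 + e) (s - 1) * exp (- (s * e)) * (5 / 17) / (2 * sqrt s).
Proof.
  intros Hs He. unfold chi_kernel, stirling_bound, Rpower.
  rewrite <- (Rpower_sqrt s), !ln_mult by lra. unfold Rpower.
  replace (- (2 * s * (1 + e)) / 2) with (- s + - (s * e)) by field.
  replace ((s - 1) * (ln 2 + ln s + ln (1 + e)))
    with ((s - 1) * ln (1 + e) + (s * ln 2 + ((s - 1 / 2) * ln s + (- ln 2 + - (/ 2 * ln s)))))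
    by field.
  replace ((s - 1 / 2) * ln s - s) with ((s - 1 / 2) * ln s + - s) by ring.
  rewrite !exp_plus, !exp_Ropp, exp_ln by lra.
  field. repeat split; (apply Rgt_not_eq, exp_pos || lra).
Qed.

Section ChiSquare.

Variable k : nat.
Hypothesis k_pos : (1 <= k)%nat.

Let s := INR k / 2.

Lemma half_dof_pos : 0 < s.
Proof. unfold s. apply Rdiv_lt_0_compat; [apply lt_0_INR; lia | lra]. Qed.

Lemma chisq_normalizer_pos : 0 < Rpower 2 s * Gamma s.
Proof.
  apply Rmult_lt_0_compat; [unfold Rpower; apply exp_pos|].
  apply Gamma_half_integer_bounds, k_pos.
Qed.

Lemma chisq_density_cont x : 0 < x -> continuous (chisq_density k) x.
Proof.
  intros Hx. pose proof chisq_normalizer_pos as HD. unfold Rpower in HD.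
  apply continuous_of_ex_derive. unfold chisq_density, Rpower. auto_derive.
  repeat split; auto; lra.
Qed.

Lemma chisq_density_ge0 x : 0 < x -> 0 <= chisq_density k x.
Proof.
  intros Hx. apply Rlt_le, Rdiv_lt_0_compat; [|exact chisq_normalizer_pos].
  unfold Rpower. apply Rmult_lt_0_compat; apply exp_pos.
Qed.

(* From ln y <= y - 1 at y = x / (4 s). *)
Lemma chi_kernel_le_exp x : 1 <= x ->
  chi_kernel s x <= exp (s * (ln (4 * s) - 1)) * exp (- x / 4).
Proof.
  intros Hx. pose proof half_dof_pos.
  unfold chi_kernel, Rpower. rewrite <- !exp_plus. apply exp_le_exp.
  assert (0 <= ln x) by (rewrite <- ln_1; apply ln_le; lra).
  assert (Hln : ln x <= ln (4 * s) + (x / (4 * s) - 1)).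
  { replace x with (4 * s * (x / (4 * s))) at 1 by (field; lra).
    rewrite ln_mult by (try apply Rdiv_lt_0_compat; lra).
    pose proof (ln_le_sub1 (x / (4 * s)) ltac:(apply Rdiv_lt_0_compat; lra)). lra. }
  apply Rmult_le_compat_l with (r := s) in Hln; [|lra].
  replace (s * (ln (4 * s) + (x / (4 * s) - 1))) with (s * (ln (4 * s) - 1) + x / 4)
    in Hln by (field; lra).
  nra.
Qed.

Lemma chisq_partial_bounded c : 1 <= c ->
  partial_integrals_le (chisq_density k) c
    (exp (s * (ln (4 * s) - 1)) / (Rpower 2 s * Gamma s) / (1 / 4)).
Proof.
  intros Hc u v Hu Huv. pose proof chisq_normalizer_pos as HD.
  set (B0 := exp (s * (ln (4 * s) - 1))).
  set (D := Rpower 2 s * Gamma s) in *.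
  apply Rle_trans with (RInt (fun x => B0 / D * exp (- (1 / 4) * (x - 0))) u v).
  - apply RInt_le_cont; [lra| | |].
    + intros x Hx. apply chisq_density_cont. lra.
    + intros x Hx. apply continuous_of_ex_derive. auto_derive. auto.
    + intros x Hx. unfold chisq_density. fold s D.
      replace (B0 / D * exp (- (1 / 4) * (x - 0))) with (B0 * exp (- (1 / 4) * (x - 0)) / D)
        by (field; lra).
      apply Rmult_le_compat_r; [apply Rlt_le, Rinv_0_lt_compat; exact HD|].
      replace (- (1 / 4) * (x - 0)) with (- x / 4) by field.
      apply chi_kernel_le_exp. lra.
  - rewrite RInt_exp_decay by lra.
    assert (0 < B0 / D / (1 / 4)).
    { apply Rdiv_lt_0_compat; [apply Rdiv_lt_0_compat; [apply exp_pos|exact HD]|lra]. }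
    assert (exp (- (1 / 4) * (u - 0)) <= 1) by (apply exp_le_1; lra).
    pose proof (exp_pos (- (1 / 4) * (v - 0))).
    nra.
Qed.

Lemma chisq_tail_ge c L r : 1 <= c -> 0 < L -> 0 < r ->
  (forall x, c <= x <= c + L -> chi_kernel s c * exp (- r * (x - c)) <= chi_kernel s x) ->
  chi_kernel s c / (Rpower 2 s * stirling_bound s) / r * (1 - exp (- r * L)) <= chisq_tail k c.
Proof.
  intros Hc HL Hr Hdecay.
  pose proof chisq_normalizer_pos as HD.
  assert (Hker : 0 < chi_kernel s c).
  { unfold chi_kernel, Rpower. apply Rmult_lt_0_compat; apply exp_pos. }
  destruct (Iint_partial_le (chisq_density k) c
     (fun x Hx => chisq_density_cont x ltac:(lra))
     (fun x Hx => chisq_density_ge0 x ltac:(lra)) _ (chisq_partial_bounded c Hc)) as [Hub _].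
  assert (Hexp : 0 <= 1 - exp (- r * L)).
  { enough (exp (- r * L) <= 1) by lra. apply exp_le_1. nra. }
  apply Rle_trans with (chi_kernel s c / (Rpower 2 s * Gamma s) / r * (1 - exp (- r * L))).
  - apply Rmult_le_compat_r; [exact Hexp|]. unfold Rdiv.
    apply Rmult_le_compat_r; [apply Rlt_le, Rinv_0_lt_compat; lra|].
    apply Rmult_le_compat_l; [lra|]. apply Rinv_le_contravar; [exact HD|].
    apply Rmult_le_compat_l; [unfold Rpower; apply Rlt_le, exp_pos|].
    apply Gamma_half_integer_bounds, k_pos.
  - apply (exp_minorant_le_partial_bound (chisq_density k) c L); auto.
    + apply Rdiv_lt_0_compat; assumption.
    + intros x Hx. unfold chisq_density. fold s.
      set (D := Rpower 2 s * Gamma s) in *.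
      replace (chi_kernel s c / D * exp (- r * (x - c)))
        with (chi_kernel s c * exp (- r * (x - c)) / D) by (field; lra).
      apply Rmult_le_compat_r; [apply Rlt_le, Rinv_0_lt_compat; exact HD|].
      now apply Hdecay.
    + intros x Hx. apply chisq_density_cont. lra.
Qed.

Lemma chisq_tail_ge_rate e L r m : 0 <= e -> 0 < L -> 0 < r -> m <= r * L ->
  (forall x, INR k * (1 + e) <= x <= INR k * (1 + e) + L ->
     chi_kernel s (INR k * (1 + e)) * exp (- r * (x - INR k * (1 + e))) <= chi_kernel s x) ->
  Rpower (1 + e) (s - 1) * exp (- (s * e)) * (5 / 17) / (2 * sqrt s) / r * (1 - exp (- m))
    <= chisq_tail k (INR k * (1 + e)).
Proof.
  intros He HL Hr Hm Hdecay.
  pose proof half_dof_pos.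
  assert (Hc : 1 <= INR k * (1 + e)).
  { apply le_INR in k_pos. simpl in k_pos. nra. }
  eapply Rle_trans; [|apply (chisq_tail_ge _ L r Hc HL Hr Hdecay)].
  replace (INR k * (1 + e)) with (2 * s * (1 + e)) by (unfold s; field).
  rewrite chi_kernel_ratio by lra.
  apply Rmult_le_compat_l.
  - apply Rlt_le, Rdiv_lt_0_compat; [|exact Hr].
    apply Rdiv_lt_0_compat; [|apply Rmult_lt_0_compat; [lra|apply sqrt_lt_R0; lra]].
    unfold Rpower. pose proof (exp_pos ((s - 1) * ln (1 + e))). pose proof (exp_pos (- (s * e))).
    nra.
  - enough (exp (- r * L) <= exp (- m)) by lra. apply exp_le_exp. lra.
Qed.

End ChiSquare.

Lemma Rpower_1p_mul_ge s e : 1 <= s -> 0 < 1 + e ->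
  1 + s * e <= Rpower (1 + e) (s - 1) * (1 + e).
Proof.
  intros Hs He. unfold Rpower.
  assert (e / (1 + e) <= ln (1 + e)).
  { replace (e / (1 + e)) with (1 - / (1 + e)) by (field; lra). now apply one_sub_inv_le_ln. }
  assert ((s - 1) * (e / (1 + e)) <= (s - 1) * ln (1 + e)) by (apply Rmult_le_compat_l; lra).
  pose proof (exp_ineq1_le ((s - 1) * ln (1 + e))).
  replace (1 + s * e) with ((1 + (s - 1) * (e / (1 + e))) * (1 + e)) by (field; lra).
  apply Rmult_le_compat_r; lra.
Qed.

Lemma cubic_factor_le x e : 1 <= x -> 0 <= e ->
  (1 + e) * (x * x * e + x + 1) <= (1 + x * x * e) * (x * (1 + e) + 1).
Proof.
  intros Hx He.
  assert (0 <= e * (x * x * x - 1)) by (apply Rmult_le_pos; nra).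
  assert (0 <= x * x * e * e * (x - 1)) by (apply Rmult_le_pos; [|lra]; repeat apply Rmult_le_pos; lra).
  nra.
Qed.

(* The rate 1/2 - (s - 1) / (c + L) of chi_kernel_decay_ge1 at c = 2 s (1 + e) and L = 2 sqrt s,
   written in terms of x = sqrt s. *)
Definition dof_ge2_rate (x e : R) : R := (x * x * e + x + 1) / (2 * (x * x * (1 + e) + x)).

Lemma dof_ge2_rate_pos x e : 1 <= x -> 0 <= e -> 0 < dof_ge2_rate x e.
Proof. intros Hx He. apply Rdiv_lt_0_compat; nra. Qed.

Lemma dof_ge2_rate_length x e : 1 <= x -> 0 <= e -> 1 <= dof_ge2_rate x e * (2 * x).
Proof.
  intros Hx He. unfold dof_ge2_rate.
  apply Rmult_le_reg_r with (2 * (x * x * (1 + e) + x)); [nra|].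
  replace ((x * x * e + x + 1) / (2 * (x * x * (1 + e) + x)) * (2 * x) *
           (2 * (x * x * (1 + e) + x))) with (2 * x * (x * x * e + x + 1)) by (field; nra).
  assert (0 <= x * x * e * (x - 1)) by (apply Rmult_le_pos; [apply Rmult_le_pos; nra|lra]).
  nra.
Qed.

Lemma dof_ge2_gain x e P : 1 <= x -> 0 <= e -> 1 + x * x * e <= P * (1 + e) ->
  1 <= P / (2 * x) / dof_ge2_rate x e.
Proof.
  intros Hx He HP. unfold dof_ge2_rate.
  replace (P / (2 * x) / ((x * x * e + x + 1) / (2 * (x * x * (1 + e) + x))))
    with (P * (x * (1 + e) + 1) / (x * x * e + x + 1)) by (field; nra).
  apply Rmult_le_reg_r with ((1 + e) * (x * x * e + x + 1)); [nra|].
  replace (P * (x * (1 + e) + 1) / (x * x * e + x + 1) * ((1 + e) * (x * x * e + x + 1)))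
    with (P * (1 + e) * (x * (1 + e) + 1)) by (field; nra).
  pose proof (cubic_factor_le x e Hx He).
  assert (0 <= x * (1 + e) + 1) by nra.
  nra.
Qed.

Lemma chisq_tail_ge_dof_ge2 k e : (2 <= k)%nat -> 0 <= e ->
  exp (- (INR k * e / 2)) / 6 <= chisq_tail k (INR k * (1 + e)).
Proof.
  intros Hk He.
  assert (Hk2 : 2 <= INR k) by (apply le_INR in Hk; simpl in Hk; lra).
  set (s := INR k / 2).
  assert (Hs : 1 <= s) by (unfold s; lra).
  set (x := sqrt s).
  assert (Hxx : x * x = s) by (apply sqrt_sqrt; lra).
  assert (Hx : 1 <= x) by (unfold x; rewrite <- sqrt_1; apply sqrt_le_1_alt; lra).
  set (r := dof_ge2_rate x e).
  assert (Hr : 0 < r) by now apply dof_ge2_rate_pos.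
  assert (Hrate : 1 / 2 - (s - 1) / (INR k * (1 + e) + 2 * x) = r).
  { unfold r, dof_ge2_rate. replace (INR k) with (2 * (x * x)) by (unfold s in Hxx; lra).
    rewrite Hxx. field. nra. }
  eapply Rle_trans; [|apply (chisq_tail_ge_rate k ltac:(lia) e (2 * x) r 1)].
  - fold s x. replace (INR k * e / 2) with (s * e) by (unfold s; field).
    pose proof (exp_pos (- (s * e))) as HQ. pose proof exp_neg1_bounds.
    pose proof (dof_ge2_gain x e (Rpower (1 + e) (s - 1)) Hx He
                  ltac:(rewrite Hxx; apply Rpower_1p_mul_ge; lra)) as Hgain.
    fold r in Hgain. set (Q := exp (- (s * e))) in *.
    replace (- (1)) with (-1) by ring.
    replace (Rpower (1 + e) (s - 1) * Q * (5 / 17) / (2 * x) / r * (1 - exp (-1)))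
      with (Q * (5 / 17) * (1 - exp (-1)) * (Rpower (1 + e) (s - 1) / (2 * x) / r))
      by (field; lra).
    apply Rle_trans with (Q * (5 / 17) * (1 - exp (-1)) * 1); [nra|].
    apply Rmult_le_compat_l; [nra|exact Hgain].
  - exact He.
  - lra.
  - exact Hr.
  - now apply dof_ge2_rate_length.
  - intros z Hz. rewrite <- Hrate. apply chi_kernel_decay_ge1; [exact Hs|nra|lra|exact Hz].
Qed.

Lemma dof1_constant_ge y : 1 <= y ->
  1 / 3 <= 10 / 17 * y / (2 * sqrt (1 / 2)) * (1 - exp (-1) * exp (-1)).
Proof.
  intros Hy.
  assert (Ht : 2 * sqrt (1 / 2) <= 3 / 2).
  { enough (Hsq : sqrt (1 / 2) <= sqrt ((3 / 4) ^ 2)) by (rewrite sqrt_pow2 in Hsq; lra).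
    apply sqrt_le_1_alt. lra. }
  assert (0 < sqrt (1 / 2)) by (apply sqrt_lt_R0; lra).
  pose proof exp_neg1_bounds.
  assert (exp (-1) * exp (-1) <= 0.3681 * 0.3681) by (apply Rmult_le_compat; lra).
  apply Rmult_le_reg_r with (2 * sqrt (1 / 2)); [lra|].
  replace (10 / 17 * y / (2 * sqrt (1 / 2)) * (1 - exp (-1) * exp (-1)) * (2 * sqrt (1 / 2)))
    with (10 / 17 * y * (1 - exp (-1) * exp (-1))) by (field; lra).
  nra.
Qed.

Lemma chisq_tail_ge_dof1 e : 0 <= e ->
  exp (- (e / 2)) / (3 * (2 + e)) <= chisq_tail 1 (1 + e).
Proof.
  intros He.
  set (r := (2 + e) / (2 * (1 + e))).
  assert (Hr : 0 < r) by (apply Rdiv_lt_0_compat; lra).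
  assert (Hrate : 1 / 2 + (1 - INR 1 / 2) / (INR 1 * (1 + e)) = r) by (unfold r; simpl; field; lra).
  replace (chisq_tail 1 (1 + e)) with (chisq_tail 1 (INR 1 * (1 + e))) by (simpl; f_equal; ring).
  eapply Rle_trans; [|apply (chisq_tail_ge_rate 1 ltac:(lia) e 4 r 2)].
  - replace (INR 1 / 2) with (1 / 2) by (simpl; field).
    replace (- (2)) with (-1 + -1) by ring. rewrite exp_plus.
    set (y := sqrt (1 + e)).
    assert (Hyy : y * y = 1 + e) by (apply sqrt_sqrt; lra).
    assert (Hy : 1 <= y) by (rewrite <- sqrt_1; apply sqrt_le_1_alt; lra).
    assert (Hpow : Rpower (1 + e) (1 / 2 - 1) = / y).
    { replace (1 / 2 - 1) with (- / 2) by field.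
      now rewrite Rpower_Ropp, Rpower_sqrt by lra. }
    assert (0 < sqrt (1 / 2)) by (apply sqrt_lt_R0; lra).
    rewrite Hpow. replace (- (1 / 2 * e)) with (- (e / 2)) by field.
    pose proof (exp_pos (- (e / 2))). pose proof (dof1_constant_ge y Hy).
    replace (exp (- (e / 2)) / (3 * (2 + e))) with (exp (- (e / 2)) / (2 + e) * (1 / 3))
      by (field; lra).
    replace (/ y * exp (- (e / 2)) * (5 / 17) / (2 * sqrt (1 / 2)) / r * (1 - exp (-1) * exp (-1)))
      with (exp (- (e / 2)) / (2 + e) *
            (10 / 17 * y / (2 * sqrt (1 / 2)) * (1 - exp (-1) * exp (-1)))).
    2:{ unfold r. rewrite <- Hyy. field. repeat split; nra. }
    apply Rmult_le_compat_l; [|assumption].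
    apply Rlt_le, Rdiv_lt_0_compat; lra.
  - exact He.
  - lra.
  - exact Hr.
  - unfold r. apply Rmult_le_reg_r with (2 * (1 + e)); [lra|].
    replace ((2 + e) / (2 * (1 + e)) * 4 * (2 * (1 + e))) with (4 * (2 + e)) by (field; lra).
    lra.
  - intros z Hz. rewrite <- Hrate. apply chi_kernel_decay_le1; simpl in *; lra.
Qed.

Theorem mainTheorem5 (k : nat) (eps : R) (Hk : (1 <= k)%nat) (Heps : 0 <= eps) :
  chisq_tail k (INR k * (1 + eps)) >=
  / (3 * sqrt (INR k) * eps + 6) * exp (- (INR k * eps / 2)).
Proof.
  apply Rle_ge.
  destruct (Nat.le_gt_cases 2 k) as [Hk2 | Hk1].
  - eapply Rle_trans; [|exact (chisq_tail_ge_dof_ge2 k eps Hk2 Heps)].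
    assert (0 <= 3 * sqrt (INR k) * eps)
      by (apply Rmult_le_pos; [pose proof (sqrt_pos (INR k)); lra | exact Heps]).
    pose proof (exp_pos (- (INR k * eps / 2))).
    rewrite Rmult_comm. unfold Rdiv. apply Rmult_le_compat_l; [lra|].
    apply Rinv_le_contravar; lra.
  - replace k with 1%nat by lia.
    replace (INR 1) with 1 by reflexivity. rewrite sqrt_1, !Rmult_1_l.
    eapply Rle_trans; [|exact (chisq_tail_ge_dof1 eps Heps)].
    right. field. lra.
Qed.
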